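(* Let $\mathbf m_1,\mathbf m_2,\mathbf m_3\in\mathbb R^3$ and $t_1,t_2,t_3\in\mathbb R$ with $\mathbf m_1\neq 0$, $\mathbf m_1\cdot\mathbf m_3=0$, and $\mathbf m_2,\mathbf m_3$ linearly independent, and let $$\mathbf A_1=\begin{bmatrix}\mathbf m_1^T & t_1\\ \mathbf 0^T & 1\end{bmatrix},\qquad \mathbf A_2=\begin{bmatrix}\mathbf m_2^T & t_2\\ \mathbf m_3^T & t_3\end{bmatrix}.$$ Then there exist unique reals $v>0$, $f>0$, $u$, unique unit vectors $\mathbf r_1,\mathbf r_2,\mathbf r_3\in\mathbb R^3$ with $\mathbf r_3\cdot\mathbf r_1=\mathbf r_3\cdot\mathbf r_2=0$, unique reals $t_1',t_2',t_3'$, and a unique scalar $c>0$ such that $$\mathbf A_1=\mathbf K_1\begin{bmatrix}\mathbf r_1^T & t_1'\\ \mathbf 0^T & 1\end{bmatrix},\qquad \mathbf A_2=c\,\mathbf K_2\begin{bmatrix}\mathbf r_2^T & t_2'\\ \mathbf r_3^T & t_3'\end{bmatrix},\qquad \mathbf K_1=\begin{bmatrix}1/v&0\\0&1\end{bmatrix},\ \mathbf K_2=\begin{bmatrix}f&u\\0&1\end{bmatrix}.$$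
   Context: A pair $(\mathbf A_1,\mathbf A_2)$ of $2\times4$ matrices represents the camera $\mathbf x\mapsto\big(\mathbf a_1^T\mathbf x/\mathbf a_2^T\mathbf x,\ \mathbf b_1^T\mathbf x/\mathbf b_2^T\mathbf x,\ 1\big)$ with $\mathbf a_i$, $\mathbf b_i$ the rows of $\mathbf A_1$, $\mathbf A_2$; when the second row of $\mathbf A_1$ is $(0,0,0,1)$ one slit (the null space of $\mathbf A_1$) lies in the plane at infinity, and the camera is called a (linear) pushbroom camera. *)

(* The reals are modelled by an arbitrary real closed field
   R : rcfType (covers the classical reals; square roots are needed). *)
From HB Require Import structures.
From mathcomp Require Import all_boot all_order all_algebra.
Set Implicit Arguments. Unset Strict Implicit. Unset Printing Implicit Defensive.
Import Order.TTheory GRing.Theory Num.Theory.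
Local Open Scope ring_scope.

Definition dot3 {R : nzRingType} (a b : 'rV[R]_3) : R := (a *m b^T) 0 0.

(* The 2x4 matrix [ a^T  x ; b^T  y ] with a, b in R^3 and x, y scalars. *)
Definition mx24 {R : nzRingType} (a : 'rV[R]_3) (x : R) (b : 'rV[R]_3) (y : R)
  : 'M[R]_(2, 4) :=
  \matrix_(i < 2, j < 4)
    if i == 0 :> nat then (if (j < 3)%N then a 0 (inord j) else x)
    else (if (j < 3)%N then b 0 (inord j) else y).

Definition mx22 {R : nzRingType} (a b c d : R) : 'M[R]_2 :=
  \matrix_(i < 2, j < 2)
    if i == 0 :> nat then (if j == 0 :> nat then a else b)
    else (if j == 0 :> nat then c else d).

Definition K1 {R : fieldType} (v : R) : 'M[R]_2 := mx22 (v^-1) 0 0 1.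
Definition K2 {R : nzRingType} (f u : R) : 'M[R]_2 := mx22 f u 0 1.

Definition pushbroom_decomp {R : rcfType}
  (m1 m2 m3 : 'rV[R]_3) (t1 t2 t3 : R)
  (v f u : R) (r1 r2 r3 : 'rV[R]_3) (t1' t2' t3' c : R) : Prop :=
  [/\ [/\ 0 < v, 0 < f & 0 < c],
      [/\ dot3 r1 r1 = 1, dot3 r2 r2 = 1, dot3 r3 r3 = 1,
          dot3 r3 r1 = 0 & dot3 r3 r2 = 0],
      mx24 m1 t1 0 1 = K1 v *m mx24 r1 t1' 0 1 &
      mx24 m2 t2 m3 t3 = c *: (K2 f u *m mx24 r2 t2' r3 t3')].

(* Both factorizations are read off row by row.  The first camera gives
   m1 = v^-1 r1, so r1 and v^-1 are the direction and length of m1.  The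
   second gives m3 = c r3 and m2 = c (f r2 + u r3) with r2 a unit vector
   orthogonal to r3: so c, r3 come from m3, u is the component of m2 / c
   along r3, and f, r2 are the length and direction of the remaining
   Gram-Schmidt residue, which is nonzero because m2 and m3 are independent.
   The translations then solve a triangular linear system. *)
From HB Require Import structures.
From mathcomp Require Import all_boot all_order all_algebra.
From mathcomp Require Import ring.
Import Order.TTheory GRing.Theory Num.Theory.
Local Open Scope ring_scope.

Section PushbroomDecomposition.
Context {R : rcfType}.
Implicit Types (a b e s : 'rV[R]_3) (k : R).

Lemma mx22_mul_mx24 (a b c d : R) p x q y :
  mx22 a b c d *m mx24 p x q y =
  mx24 (a *: p + b *: q) (a * x + b * y) (c *: p + d *: q) (c * x + d * y).
Proof.
apply/matrixP=> i j; rewrite !mxE !big_ord_recl big_ord0 !mxE /=.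
case: i => [[|[|i]] Hi] //=; case: j => [[|[|[|[|j]]]] Hj] //=; rewrite ?mxE; ring.
Qed.

Lemma scale_mx24 k p x q y :
  k *: mx24 p x q y = mx24 (k *: p) (k * x) (k *: q) (k * y).
Proof.
apply/matrixP=> i j; rewrite !mxE.
by case: i => [[|[|i]] Hi] //=; case: j => [[|[|[|[|j]]]] Hj] //=; rewrite ?mxE.
Qed.

Lemma mx24_inj p x q y p' x' q' y' :
  mx24 p x q y = mx24 p' x' q' y' :> 'M[R]_(2, 4) ->
  [/\ p = p', x = x', q = q' & y = y'].
Proof.
pose i1 : 'I_2 := @Ordinal 2 1 isT; pose j3 : 'I_4 := @Ordinal 4 3 isT.
pose widen3 := widen_ord (isT : (3 <= 4)%N).
move=> E; split.
- apply/rowP=> k; have := congr1 (fun M : 'M[R]_(2, 4) => M 0 (widen3 k)) E.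
  by rewrite !mxE /= ltn_ord inord_val.
- by have := congr1 (fun M : 'M[R]_(2, 4) => M 0 j3) E; rewrite !mxE.
- apply/rowP=> k; have := congr1 (fun M : 'M[R]_(2, 4) => M i1 (widen3 k)) E.
  by rewrite !mxE /= ltn_ord inord_val.
- by have := congr1 (fun M : 'M[R]_(2, 4) => M i1 j3) E; rewrite !mxE.
Qed.

Lemma first_factor_eqP (m1 r1 : 'rV[R]_3) t1 v t1' :
  mx24 m1 t1 0 1 = K1 v *m mx24 r1 t1' 0 1 <->
  m1 = v^-1 *: r1 /\ t1 = v^-1 * t1'.
Proof.
rewrite mx22_mul_mx24 scaler0 addr0 mul0r addr0 scale0r add0r scaler0.
by rewrite mul0r mul1r add0r; split=> [/mx24_inj[]|[-> ->]].
Qed.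

Lemma second_factor_eqP (m2 m3 r2 r3 : 'rV[R]_3) t2 t3 f u t2' t3' c :
  mx24 m2 t2 m3 t3 = c *: (K2 f u *m mx24 r2 t2' r3 t3') <->
  [/\ m2 = c *: (f *: r2 + u *: r3), t2 = c * (f * t2' + u * t3'),
      m3 = c *: r3 & t3 = c * t3'].
Proof.
rewrite mx22_mul_mx24 scale_mx24 scale0r add0r scale1r mul0r add0r mul1r.
by split=> [/mx24_inj[]|[-> -> -> ->]].
Qed.

Lemma row_free_col_mx_comb_eq0 {a b x y} :
  row_free (col_mx a b) -> x *: a + y *: b = 0 -> x = 0 /\ y = 0.
Proof.
move=> free_ab comb0.
have : row_mx (x%:M : 'M_1) (y%:M : 'M_1) *m col_mx a b == 0.
  by rewrite mul_row_col !mul_scalar_mx comb0.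
rewrite mulmx_free_eq0 // row_mx_eq0 => /andP[/eqP x0 /eqP y0].
by split; [move: x0 | move: y0] => /(congr1 (fun M : 'M_1 => M 0 0)); rewrite !mxE.
Qed.

Lemma dot3E a b : dot3 a b = \sum_i a 0 i * b 0 i.
Proof. by rewrite /dot3 mxE; apply: eq_bigr => i _; rewrite mxE. Qed.

Lemma dot3C a b : dot3 a b = dot3 b a.
Proof. by rewrite !dot3E; apply: eq_bigr => i _; rewrite mulrC. Qed.

Lemma dot3Zl k a b : dot3 (k *: a) b = k * dot3 a b.
Proof. by rewrite /dot3 -scalemxAl mxE. Qed.

Lemma dot3Dl a b e : dot3 (a + b) e = dot3 a e + dot3 b e.
Proof. by rewrite /dot3 mulmxDl mxE. Qed.

Lemma dot3Bl a b e : dot3 (a - b) e = dot3 a e - dot3 b e.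
Proof. by rewrite dot3Dl -scaleN1r dot3Zl mulN1r. Qed.

Lemma dot3_eq0 a : (dot3 a a == 0) = (a == 0).
Proof.
apply/eqP/eqP=> [|->]; last by rewrite dot3E big1 // => i _; rewrite mxE mul0r.
rewrite dot3E => /psumr_eq0P sq0; apply/rowP => i; rewrite mxE.
by apply/eqP; rewrite -sqrf_eq0 expr2 sq0 // => j _; rewrite -expr2 sqr_ge0.
Qed.

Lemma dot3_ge0 a : 0 <= dot3 a a.
Proof. by rewrite dot3E; apply: sumr_ge0 => i _; rewrite -expr2 sqr_ge0. Qed.

Lemma dot3_sub_proj a e : dot3 e e = 1 -> dot3 (a - dot3 a e *: e) e = 0.
Proof. by move=> e1; rewrite dot3Bl dot3Zl e1 mulr1 subrr. Qed.

Definition norm3 a := Num.sqrt (dot3 a a).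
Definition normalize a := (norm3 a)^-1 *: a.

Lemma norm3_gt0 {a} : a != 0 -> 0 < norm3 a.
Proof. by rewrite -dot3_eq0 => a0; rewrite sqrtr_gt0 lt_def a0 dot3_ge0. Qed.

Lemma dot3_normalize {a} : a != 0 -> dot3 (normalize a) (normalize a) = 1.
Proof.
move=> a0; rewrite dot3Zl dot3C dot3Zl -[dot3 a a]sqr_sqrtr ?dot3_ge0 // -/(norm3 a).
by field; rewrite gt_eqF ?norm3_gt0.
Qed.

Lemma scale_norm3_normalize {a} : a != 0 -> norm3 a *: normalize a = a.
Proof. by move=> a0; rewrite scalerA mulfV ?scale1r // gt_eqF ?norm3_gt0. Qed.

Lemma polar_uniq {k a s} :
  dot3 s s = 1 -> 0 < k -> a = k *: s -> k = norm3 a /\ s = normalize a.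
Proof.
move=> s1 k0 ->; rewrite /normalize; have -> : norm3 (k *: s) = k.
  by rewrite /norm3 dot3Zl dot3C dot3Zl s1 mulr1 -expr2 sqrtr_sqr gtr0_norm.
by rewrite scalerA mulVf ?scale1r // gt_eqF.
Qed.

Section FirstCamera.
Variables (m1 : 'rV[R]_3) (t1 : R).

Lemma first_factor_exists : m1 != 0 ->
  [/\ 0 < (norm3 m1)^-1, dot3 (normalize m1) (normalize m1) = 1 &
      mx24 m1 t1 0 1 = K1 (norm3 m1)^-1 *m mx24 (normalize m1) ((norm3 m1)^-1 * t1) 0 1].
Proof.
move=> m10; have n0 := norm3_gt0 m10.
split; [by rewrite invr_gt0 | exact: dot3_normalize |].
by apply/first_factor_eqP; rewrite invrK scale_norm3_normalize // mulrA mulfV ?mul1r ?gt_eqF.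
Qed.

Lemma first_factor_uniq {v r1 t1'} :
  0 < v -> dot3 r1 r1 = 1 -> mx24 m1 t1 0 1 = K1 v *m mx24 r1 t1' 0 1 ->
  [/\ v = (norm3 m1)^-1, r1 = normalize m1 & t1' = (norm3 m1)^-1 * t1].
Proof.
move=> v0 r11 /first_factor_eqP[m1E ->].
have vV0 : 0 < v^-1 by rewrite invr_gt0.
have [vE ->] := polar_uniq r11 vV0 m1E.
by rewrite -vE invrK mulrA mulfV ?mul1r // gt_eqF.
Qed.

End FirstCamera.

Section SecondCamera.
Variables (m2 m3 : 'rV[R]_3) (t2 t3 : R).

Definition skew := dot3 ((norm3 m3)^-1 *: m2) (normalize m3).
Definition residue := (norm3 m3)^-1 *: m2 - skew *: normalize m3.
Definition second_t3 := t3 / norm3 m3.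
Definition second_t2 := (t2 / norm3 m3 - skew * second_t3) / norm3 residue.

Hypothesis free_m23 : row_free (col_mx m2 m3).

Lemma second_row_neq0 : m3 != 0.
Proof.
apply/eqP=> m30; have comb0 : 0 *: m2 + 1 *: m3 = 0 by rewrite m30 scaler0 addr0 scale0r.
by have [_ /eqP] := row_free_col_mx_comb_eq0 free_m23 comb0; rewrite oner_eq0.
Qed.

Lemma residue_neq0 : residue != 0.
Proof.
have c0 := norm3_gt0 second_row_neq0; apply/eqP=> res0.
have comb0 : (norm3 m3)^-1 *: m2 + (- (skew / norm3 m3)) *: m3 = 0.
  by rewrite -res0 /residue scaleNr scalerA.
have [/eqP + _] := row_free_col_mx_comb_eq0 free_m23 comb0.
by rewrite invr_eq0 gt_eqF.
Qed.

Lemma second_factor_exists :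
  let c := norm3 m3 in let f := norm3 residue in
  let r2 := normalize residue in let r3 := normalize m3 in
  [/\ [/\ 0 < f, 0 < c, dot3 r2 r2 = 1, dot3 r3 r3 = 1 & dot3 r3 r2 = 0] &
      mx24 m2 t2 m3 t3 = c *: (K2 f skew *m mx24 r2 second_t2 r3 second_t3)].
Proof.
move=> c f r2 r3.
have c0 : 0 < c := norm3_gt0 second_row_neq0; have f0 : 0 < f := norm3_gt0 residue_neq0.
have r31 : dot3 r3 r3 = 1 := dot3_normalize second_row_neq0.
split.
  split; rewrite ?dot3_normalize ?second_row_neq0 ?residue_neq0 //.
  by rewrite dot3C dot3Zl dot3_sub_proj // mulr0.
apply/second_factor_eqP; split.
- by rewrite scale_norm3_normalize ?residue_neq0 // subrK scalerA mulfV ?gt_eqF ?scale1r.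
- by rewrite /second_t2 /second_t3 -/c -/f; field; rewrite !gt_eqF.
- by rewrite scale_norm3_normalize ?second_row_neq0.
- by rewrite /second_t3 mulrC divfK ?gt_eqF.
Qed.

Lemma second_factor_uniq {f u r2 r3 t2' t3' c} :
  0 < f -> 0 < c -> dot3 r2 r2 = 1 -> dot3 r3 r3 = 1 -> dot3 r3 r2 = 0 ->
  mx24 m2 t2 m3 t3 = c *: (K2 f u *m mx24 r2 t2' r3 t3') ->
  [/\ f = norm3 residue, u = skew, r2 = normalize residue, r3 = normalize m3 &
      [/\ t2' = second_t2, t3' = second_t3 & c = norm3 m3]].
Proof.
move=> f0 c0 r21 r31 r32 /second_factor_eqP[m2E t2E m3E t3E].
have [cE r3E] := polar_uniq r31 c0 m3E.
have m2c : (norm3 m3)^-1 *: m2 = f *: r2 + u *: r3.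
  by rewrite m2E -cE scalerA mulVf ?gt_eqF ?scale1r.
have uE : u = skew.
  by rewrite /skew m2c -r3E dot3Dl !dot3Zl dot3C r32 r31 mulr0 mulr1 add0r.
have [fE r2E] : f = norm3 residue /\ r2 = normalize residue.
  by apply: polar_uniq => //; rewrite /residue m2c -r3E -uE addrK.
have t3'E : t3' = second_t3 by rewrite /second_t3 t3E -cE mulrC mulKf ?gt_eqF.
split=> //; split=> //.
rewrite /second_t2 -fE -uE -t3'E -cE t2E; field; rewrite !gt_eqF //.
Qed.

End SecondCamera.

End PushbroomDecomposition.

Theorem mainTheorem3 (R : rcfType) (m1 m2 m3 : 'rV[R]_3) (t1 t2 t3 : R) :
  m1 != 0 -> dot3 m1 m3 = 0 -> row_free (col_mx m2 m3) ->
  exists (v f u : R) (r1 r2 r3 : 'rV[R]_3) (t1' t2' t3' c : R),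
    pushbroom_decomp m1 m2 m3 t1 t2 t3 v f u r1 r2 r3 t1' t2' t3' c /\
    forall (v0 f0 u0 : R) (s1 s2 s3 : 'rV[R]_3) (s1' s2' s3' c0 : R),
      pushbroom_decomp m1 m2 m3 t1 t2 t3 v0 f0 u0 s1 s2 s3 s1' s2' s3' c0 ->
      [/\ v0 = v, f0 = f, u0 = u,
          [/\ s1 = r1, s2 = r2 & s3 = r3] &
          [/\ s1' = t1', s2' = t2', s3' = t3' & c0 = c]].
Proof.
move=> m10 m13 free_m23.
have [v0 r11 A1E] := first_factor_exists m1 t1 m10.
have [[f0 c0 r22 r33 r32] A2E] := second_factor_exists m2 m3 t2 t3 free_m23.
exists (norm3 m1)^-1, (norm3 (residue m2 m3)), (skew m2 m3), (normalize m1),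
  (normalize (residue m2 m3)), (normalize m3), ((norm3 m1)^-1 * t1),
  (second_t2 m2 m3 t2 t3), (second_t3 m3 t3), (norm3 m3).
split.
  split=> //; split=> //.
  by rewrite /normalize dot3Zl dot3C dot3Zl m13 !mulr0.
move=> v f u s1 s2 s3 s1' s2' s3' c [[v_gt0 f_gt0 c_gt0] [s11 s22 s33 s31 s32]].
move=> /(first_factor_uniq _ _ v_gt0 s11) [-> -> ->].
by move=> /(second_factor_uniq _ _ _ _ f_gt0 c_gt0 s22 s33 s32) [-> -> -> -> [-> -> ->]].
Qed.
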